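(* Let $0<\delta\le1$ and let $t$ be a time with $\omega(t)>0$ at which the stability conditions $|\upsilon(t)/\omega(t)|\le\delta$ and $|\eta^{(n-1)}(t)/\omega^n(t)|\le\delta^n$ for $n=2,3$ hold (with $x_+$ three times continuously differentiable and nonvanishing near $t$). Let $(w_k)_{k\ge0}$ be complex numbers (the values $w_k=\widetilde\Psi_k(\omega_\psi)$) with $w_0=1$, $w_1=0$, and satisfying the wavelet suitability criteria $|w_k|\le k!\,\delta^{-k/2}$ for even $k\ge2$ and $|w_k|\le k!\,\delta^{-(k-1)/2}$ for odd $k\ge3$. For real $z$ define \[ F(z)=\sum_{m=0}^{\infty}\sum_{n=0}^{3}\sum_{p=0}^{n}\frac{(-i)^n}{(n-p)!\,p!\,m!}\,w^*_{m+n}\,\widetilde\rho_n(t)\,z^{m+p}. \] Then for every $C>0$ there is a constant $K$ depending only on $C$ such that, whenever $C\delta^{3/2}\le\frac12$ and $|z|\le C\delta^2$, the series $F(z)$ converges absolutely and \[ F(z)-F(0)=-iz\,\widetilde\rho_1(t)\,w_2^*-z\Big[\widetilde\rho_2(t)\Big(w_2^*+\tfrac12w_3^*\Big)-\tfrac{i}{6}\widetilde\rho_3(t)\,w_4^*\Big]+\tfrac12z^2w_2^*+E(z),\qquad |E(z)|\le K\delta^4. \] Here the first term is $O(\delta^2)$ and the bracketed and $z^2$ terms are $O(\delta^3)$.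
   Context: $\upsilon,\omega$ are the instantaneous bandwidth and frequency of the analytic signal $x_+$ ($\upsilon=\Re\frac{d}{dt}\ln x_+$, $\omega=\Im\frac{d}{dt}\ln x_+$), $\eta=\omega-i\upsilon$, and $\widetilde\rho_n(t)=\frac{1}{\omega^n(t)x_+(t)}\frac{d^n}{d\tau^n}[x_+(t+\tau)e^{-i\omega(t)\tau}]|_{\tau=0}$, $\widetilde\rho_0=1$. For an analytic wavelet with peak frequency $\omega_\psi$ and $\Psi(\omega_\psi)=2$, $\widetilde\Psi_k(\omega)=\omega^k\Psi^{(k)}(\omega)/\Psi(\omega)$. In the paper's notation, with $z=\Delta\omega(t,s)=s\omega(t)/\omega_\psi-1$, $F(z)$ is the main part of $W_\psi(t,s)/x_+(t)$ in the scale deviation expansion truncated at $N=3$, $F(0)-1$ is the (truncated) scale-independent perturbation $\Delta x_\psi(t)$ (the relative deviation of the localized analytic signal $W_\psi(t,\omega_\psi/\omega(t))$ from $x_+(t)$), and $F(z)-F(0)$ is the scale-dependent perturbation $\Delta W_\psi(t,s)$ apart from the transform residual; the condition $|z|\le C\delta^2$ expresses that $(t,s)$ lies in the instantaneous frequency 2-neighborhood. *)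

From Stdlib Require Import Reals Lra Factorial.
Open Scope R_scope.

Record Cx := mkC { re : R ; im : R }.

Definition Czero : Cx := mkC 0 0.
Definition Cone : Cx := mkC 1 0.
Definition Ci : Cx := mkC 0 1.
Definition RtoC (a : R) : Cx := mkC a 0.
Definition Cadd (a b : Cx) : Cx := mkC (re a + re b) (im a + im b).
Definition Copp (a : Cx) : Cx := mkC (- re a) (- im a).
Definition Csub (a b : Cx) : Cx := Cadd a (Copp b).
Definition Cmul (a b : Cx) : Cx :=
  mkC (re a * re b - im a * im b) (re a * im b + im a * re b).
Definition Cconj (a : Cx) : Cx := mkC (re a) (- im a).
Definition Cnorm (a : Cx) : R := sqrt (re a * re a + im a * im a).
Definition Cinv (a : Cx) : Cx :=
  let d := re a * re a + im a * im a in mkC (re a / d) (- im a / d).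
Definition Cdiv (a b : Cx) : Cx := Cmul a (Cinv b).
Fixpoint Cpow (a : Cx) (n : nat) : Cx :=
  match n with O => Cone | S k => Cmul a (Cpow a k) end.
Definition Cexpi (th : R) : Cx := mkC (cos th) (sin th).

Fixpoint Csum_upto (f : nat -> Cx) (n : nat) : Cx :=
  match n with O => f O | S k => Cadd (Csum_upto f k) (f (S k)) end.

Definition Cinfinite_sum (a : nat -> Cx) (l : Cx) : Prop :=
  infinite_sum (fun m => re (a m)) (re l) /\ infinite_sum (fun m => im (a m)) (im l).

Definition Cderiv_at (f f' : R -> Cx) (s : R) : Prop :=
  derivable_pt_lim (fun u => re (f u)) s (re (f' s)) /\
  derivable_pt_lim (fun u => im (f u)) s (im (f' s)).

Definition Ccont_at (f : R -> Cx) (s : R) : Prop :=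
  continuity_pt (fun u => re (f u)) s /\ continuity_pt (fun u => im (f u)) s.

(* d/dt ln x_+ = x_+' / x_+ ;  upsilon = Re, omega = Im, eta = omega - i upsilon *)
Definition logder (x x1 : R -> Cx) (s : R) : Cx := Cdiv (x1 s) (x s).
Definition upsilon (x x1 : R -> Cx) (s : R) : R := re (logder x x1 s).
Definition omega (x x1 : R -> Cx) (s : R) : R := im (logder x x1 s).
Definition eta (x x1 : R -> Cx) (s : R) : Cx :=
  mkC (omega x x1 s) (- upsilon x x1 s).

Definition loc_sig (x x1 : R -> Cx) (t : R) (tau : R) : Cx :=
  Cmul (x (t + tau)) (Cexpi (- (omega x x1 t * tau))).

(* rho~_n(t) from the n-th tau-derivative value g_n(0) *)
Definition rho_of (x x1 : R -> Cx) (t : R) (n : nat) (gn0 : Cx) : Cx :=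
  Cdiv gn0 (Cmul (RtoC (omega x x1 t ^ n)) (x t)).

Definition rho_seq (r1 r2 r3 : Cx) (n : nat) : Cx :=
  match n with O => Cone | 1%nat => r1 | 2%nat => r2 | _ => r3 end.

Definition Fterm (w : nat -> Cx) (r1 r2 r3 : Cx) (z : R) (m n p : nat) : Cx :=
  Cmul (Cmul (Cmul (Cpow (Copp Ci) n)
                   (RtoC (/ (INR (fact (n - p)) * INR (fact p) * INR (fact m)))))
             (Cmul (Cconj (w (m + n)%nat)) (rho_seq r1 r2 r3 n)))
       (RtoC (z ^ (m + p))).

Definition Finner (w : nat -> Cx) (r1 r2 r3 : Cx) (z : R) (m : nat) : Cx :=
  Csum_upto (fun n => Csum_upto (fun p => Fterm w r1 r2 r3 z m n p) n) 3.

Definition Finner_abs (w : nat -> Cx) (r1 r2 r3 : Cx) (z : R) (m : nat) : R :=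
  sum_f_R0 (fun n => sum_f_R0 (fun p => Cnorm (Fterm w r1 r2 r3 z m n p)) n) 3.

Definition Fmain (w : nat -> Cx) (r1 r2 r3 : Cx) (z : R) : Cx :=
  Cadd (Cadd
    (Cmul (Cmul (Cmul (Copp Ci) (RtoC z)) r1) (Cconj (w 2%nat)))
    (Copp (Cmul (RtoC z)
       (Csub (Cmul r2 (Cadd (Cconj (w 2%nat)) (Cmul (RtoC (1/2)) (Cconj (w 3%nat)))))
             (Cmul (Cmul (Cmul Ci (RtoC (1/6))) r3) (Cconj (w 4%nat)))))))
    (Cmul (RtoC (1/2 * z ^ 2)) (Cconj (w 2%nat))).

From Stdlib Require Import Reals Factorial Lra Lia Psatz List.
Open Scope R_scope.

(** Writing [h(tau) = x_+(t+tau) e^{-i omega(t) tau}], its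
      logarithmic derivative is [M(tau) = i eta(t+tau) - i omega(t)], with
      [M(0) = upsilon(t)].  A general Leibniz computation ([logderiv_chain])
      expresses [h', h'', h'''] at [0] through [M, M', M''], which yields closed
      forms for [rho~_1, rho~_2, rho~_3]; the stability conditions then give
      [|rho~_n| <= 5 delta^n] ([rho_bounds]).

    With [s = sqrt delta], each summand of [F] is bounded by
      [(m+n)!/m! 5 C^(m+p) s^e] ([Fterm_bound]).  For [m >= 3] these bounds
      decay geometrically with ratio [7/8], so the series converges absolutely
      and its tail is [O(s^8)] ([dominated_series], [Finner_abs_tail]).  Among the
      summands with [m <= 2], those with [m + p = 0] cancel against [F(0)], five
      form the main part, and the remaining 21 are each [O(s^8)]
      ([head_decomposition], [remainder_bound]).  Since [s^8 = delta^4], the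
      theorem follows. *)

Lemma Cx_eq (a b : Cx) : re a = re b -> im a = im b -> a = b.
Proof. destruct a, b; simpl; intros -> ->; reflexivity. Qed.

Lemma Cnorm_ge0 (a : Cx) : 0 <= Cnorm a.
Proof. apply sqrt_pos. Qed.

Lemma Cnorm_sq (a : Cx) : Cnorm a * Cnorm a = re a * re a + im a * im a.
Proof. apply sqrt_sqrt; nra. Qed.

Lemma Cnorm_le_sq (a : Cx) (b : R) :
  0 <= b -> re a * re a + im a * im a <= b * b -> Cnorm a <= b.
Proof. intros Hb H. pose proof (Cnorm_ge0 a). pose proof (Cnorm_sq a). nra. Qed.

Lemma re_le (a : Cx) : Rabs (re a) <= Cnorm a.
Proof.
  pose proof (Cnorm_ge0 a); pose proof (Cnorm_sq a). apply Rabs_le; split; nra.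
Qed.

Lemma im_le (a : Cx) : Rabs (im a) <= Cnorm a.
Proof.
  pose proof (Cnorm_ge0 a); pose proof (Cnorm_sq a). apply Rabs_le; split; nra.
Qed.

Lemma Cnorm_le_reim (a : Cx) : Cnorm a <= Rabs (re a) + Rabs (im a).
Proof.
  pose proof (Rabs_pos (re a)); pose proof (Rabs_pos (im a)).
  apply Cnorm_le_sq; [lra|].
  pose proof (Rsqr_abs (re a)); pose proof (Rsqr_abs (im a)). unfold Rsqr in *. nra.
Qed.

(* Triangle inequality, via Cauchy-Schwarz for the real inner product. *)
Lemma Cnorm_add (a b : Cx) : Cnorm (Cadd a b) <= Cnorm a + Cnorm b.
Proof.
  pose proof (Cnorm_ge0 a); pose proof (Cnorm_ge0 b).
  pose proof (Cnorm_sq a); pose proof (Cnorm_sq b).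
  assert (Hcs : re a * re b + im a * im b <= Cnorm a * Cnorm b).
  { assert (Hsq : (re a * re b + im a * im b) * (re a * re b + im a * im b)
                  <= (Cnorm a * Cnorm b) * (Cnorm a * Cnorm b)).
    { replace ((Cnorm a * Cnorm b) * (Cnorm a * Cnorm b))
        with ((Cnorm a * Cnorm a) * (Cnorm b * Cnorm b)) by ring.
      rewrite H1, H2. pose proof (Rle_0_sqr (re a * im b - im a * re b)).
      unfold Rsqr in *; nra. }
    assert (0 <= Cnorm a * Cnorm b) by nra.
    destruct (Rle_lt_dec (re a * re b + im a * im b) (Cnorm a * Cnorm b)); [auto | nra]. }
  apply Cnorm_le_sq; [lra|]. simpl. nra.
Qed.

Lemma Cnorm_mul (a b : Cx) : Cnorm (Cmul a b) = Cnorm a * Cnorm b.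
Proof. unfold Cnorm. rewrite <- sqrt_mult by nra. f_equal. simpl. ring. Qed.

Lemma Cnorm_conj (a : Cx) : Cnorm (Cconj a) = Cnorm a.
Proof. unfold Cnorm; simpl; f_equal; ring. Qed.

Lemma Cnorm_RtoC (r : R) : Cnorm (RtoC r) = Rabs r.
Proof. unfold Cnorm; simpl. rewrite Rmult_0_l, Rplus_0_r. apply sqrt_Rsqr_abs. Qed.

Lemma Cnorm_Czero : Cnorm Czero = 0.
Proof. unfold Cnorm; simpl. transitivity (sqrt 0); [f_equal; ring | apply sqrt_0]. Qed.

Lemma Cnorm_Cone : Cnorm Cone = 1.
Proof. unfold Cnorm; simpl. transitivity (sqrt 1); [f_equal; ring | apply sqrt_1]. Qed.

Lemma Cnorm_Ci : Cnorm Ci = 1.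
Proof. unfold Cnorm; simpl. transitivity (sqrt 1); [f_equal; ring | apply sqrt_1]. Qed.

Lemma Cnorm_mi : Cnorm (Copp Ci) = 1.
Proof. unfold Cnorm; simpl. transitivity (sqrt 1); [f_equal; ring | apply sqrt_1]. Qed.

Lemma Cnorm_pow (a : Cx) (n : nat) : Cnorm (Cpow a n) = Cnorm a ^ n.
Proof. induction n; simpl; [apply Cnorm_Cone | rewrite Cnorm_mul, IHn; reflexivity]. Qed.

Lemma Csum_upto_norm (f : nat -> Cx) (N : nat) :
  Cnorm (Csum_upto f N) <= sum_f_R0 (fun i => Cnorm (f i)) N.
Proof. induction N; simpl; [lra|]. eapply Rle_trans; [apply Cnorm_add | lra]. Qed.

Lemma Cnonzero (a : Cx) : a <> Czero -> re a * re a + im a * im a <> 0.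
Proof. intros H H0. apply H. apply Cx_eq; simpl; nra. Qed.

Lemma Cdiv_mul_r (q d n : Cx) : d <> Czero -> Cmul q d = n -> Cdiv n d = q.
Proof.
  intros Hd <-. pose proof (Cnonzero _ Hd).
  unfold Cdiv, Cinv, Cmul. apply Cx_eq; simpl; field; auto.
Qed.

Lemma Rabs_le_between (x y : R) : Rabs x <= y -> - y <= x <= y.
Proof. intros H. pose proof (Rle_abs x); pose proof (Rle_abs (- x)). rewrite Rabs_Ropp in *. lra. Qed.

Lemma Cderiv_ext_value (f f' g' : R -> Cx) (s : R) :
  Cderiv_at f f' s -> f' s = g' s -> Cderiv_at f g' s.
Proof. unfold Cderiv_at; intros H E; rewrite <- E; exact H. Qed.

Lemma dpl_eq (f : R -> R) (x l l' : R) :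
  derivable_pt_lim f x l -> l = l' -> derivable_pt_lim f x l'.
Proof. intros H ->; exact H. Qed.

Lemma dpl_local (f g : R -> R) (x l : R) :
  (exists r, 0 < r /\ forall u, Rabs (u - x) < r -> f u = g u) ->
  derivable_pt_lim f x l -> derivable_pt_lim g x l.
Proof.
  intros [r [Hr Heq]] H eps Heps.
  destruct (H eps Heps) as [d Hd].
  assert (Hm : 0 < Rmin d r) by (apply Rmin_pos; [apply cond_pos | lra]).
  exists (mkposreal _ Hm). intros h Hh Hlt. simpl in Hlt.
  rewrite <- !Heq.
  - apply Hd; auto. eapply Rlt_le_trans; [exact Hlt | apply Rmin_l].
  - rewrite Rminus_diag, Rabs_R0; lra.
  - replace (x + h - x) with h by ring. eapply Rlt_le_trans; [exact Hlt | apply Rmin_r].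
Qed.

Lemma Cderiv_local (f g h : R -> Cx) (s : R) :
  (exists r, 0 < r /\ forall u, Rabs (u - s) < r -> f u = g u) ->
  Cderiv_at f h s -> Cderiv_at g h s.
Proof.
  intros [r [Hr Heq]] [H1 H2]; split; eapply dpl_local; eauto;
    exists r; split; auto; intros u Hu; rewrite Heq; auto.
Qed.

Lemma Cderiv_unique (f f1 f2 : R -> Cx) (s : R) :
  Cderiv_at f f1 s -> Cderiv_at f f2 s -> f1 s = f2 s.
Proof. intros [H1 H2] [H3 H4]. apply Cx_eq; eapply uniqueness_limite; eauto. Qed.

Lemma Cderiv_add (f f' g g' : R -> Cx) (s : R) :
  Cderiv_at f f' s -> Cderiv_at g g' s ->
  Cderiv_at (fun u => Cadd (f u) (g u)) (fun u => Cadd (f' u) (g' u)) s.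
Proof.
  intros [H1 H2] [H3 H4]; split; simpl.
  - apply (derivable_pt_lim_plus (fun u => re (f u)) (fun u => re (g u))); auto.
  - apply (derivable_pt_lim_plus (fun u => im (f u)) (fun u => im (g u))); auto.
Qed.

Lemma Cderiv_mul (f f' g g' : R -> Cx) (s : R) :
  Cderiv_at f f' s -> Cderiv_at g g' s ->
  Cderiv_at (fun u => Cmul (f u) (g u))
            (fun u => Cadd (Cmul (f' u) (g u)) (Cmul (f u) (g' u))) s.
Proof.
  intros [H1 H2] [H3 H4]; split; simpl; eapply dpl_eq.
  - apply (derivable_pt_lim_minus (fun u => re (f u) * re (g u)) (fun u => im (f u) * im (g u)));
      apply (derivable_pt_lim_mult (fun u => _ (f u)) (fun u => _ (g u))); eauto.
  - simpl; ring.
  - apply (derivable_pt_lim_plus (fun u => re (f u) * im (g u)) (fun u => im (f u) * re (g u)));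
      apply (derivable_pt_lim_mult (fun u => _ (f u)) (fun u => _ (g u))); eauto.
  - simpl; ring.
Qed.

Lemma Cderiv_const (c : Cx) (s : R) : Cderiv_at (fun _ => c) (fun _ => Czero) s.
Proof. split; simpl; apply derivable_pt_lim_const. Qed.

Lemma Cderiv_scale (a : Cx) (f f' : R -> Cx) (s : R) :
  Cderiv_at f f' s -> Cderiv_at (fun u => Cmul a (f u)) (fun u => Cmul a (f' u)) s.
Proof.
  intros H. eapply Cderiv_ext_value.
  - apply (Cderiv_mul (fun _ => a) (fun _ => Czero)); [apply Cderiv_const | exact H].
  - apply Cx_eq; simpl; ring.
Qed.

Lemma Cderiv_affine (a b : Cx) (f f' : R -> Cx) (s : R) :
  Cderiv_at f f' s ->
  Cderiv_at (fun u => Cadd (Cmul a (f u)) b) (fun u => Cmul a (f' u)) s.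
Proof.
  intros H. eapply Cderiv_ext_value.
  - apply (Cderiv_add (fun u => Cmul a (f u)) (fun u => Cmul a (f' u)) (fun _ => b) (fun _ => Czero));
      [apply Cderiv_scale, H | apply Cderiv_const].
  - apply Cx_eq; simpl; ring.
Qed.

Lemma Cderiv_shift (f f' : R -> Cx) (t s : R) :
  Cderiv_at f f' (t + s) ->
  Cderiv_at (fun u => f (t + u)) (fun u => f' (t + u)) s.
Proof.
  assert (Htr : derivable_pt_lim (fun u => t + u) s 1).
  { eapply dpl_eq; [apply (derivable_pt_lim_plus (fun _ => t) (fun u => u)) |];
      [apply derivable_pt_lim_const | apply derivable_pt_lim_id | ring]. }
  intros [H1 H2]; split; eapply dpl_eq;
    [ apply (derivable_pt_lim_comp (fun u => t + u) (fun v => re (f v))); eauto | ring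
    | apply (derivable_pt_lim_comp (fun u => t + u) (fun v => im (f v))); eauto | ring ].
Qed.

Lemma Cderiv_expi (w s : R) :
  Cderiv_at (fun u => Cexpi (- (w * u)))
            (fun u => Cmul (mkC 0 (- w)) (Cexpi (- (w * u)))) s.
Proof.
  assert (Hlin : derivable_pt_lim (fun u => - (w * u)) s (- w)).
  { eapply dpl_eq.
    - apply (derivable_pt_lim_opp (fun u => w * u)),
        (derivable_pt_lim_scal (fun u => u)), derivable_pt_lim_id.
    - ring. }
  split; simpl; eapply dpl_eq.
  - apply (derivable_pt_lim_comp (fun u => - (w * u)) cos); [exact Hlin | apply derivable_pt_lim_cos].
  - ring.
  - apply (derivable_pt_lim_comp (fun u => - (w * u)) sin); [exact Hlin | apply derivable_pt_lim_sin].
  - ring.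
Qed.

(** * Derivatives of a function whose logarithmic derivative is known *)

Lemma ball_around (u r : R) :
  Rabs u < r -> exists r', 0 < r' /\ forall v, Rabs (v - u) < r' -> Rabs v < r.
Proof.
  intros Hu. exists (r - Rabs u). split; [lra|]. intros v Hv.
  replace v with ((v - u) + u) by ring.
  eapply Rle_lt_trans; [apply Rabs_triang | lra].
Qed.

(* If [f' = f M] near [0], the first three derivatives of [f] at [0] are
   [f M], [f (M^2 + M')] and [f (M^3 + 3 M M' + M'')], written here in the
   unexpanded form produced by the Leibniz rule.  The derivatives [f1, f2, f3]
   are given abstractly and identified through uniqueness of derivatives. *)
Lemma logderiv_chain (f f1 f2 f3 M M1 M2 : R -> Cx) (r : R) :
  0 < r ->
  (forall u, Rabs u < r ->
     Cderiv_at f (fun v => Cmul (f v) (M v)) u /\ Cderiv_at f f1 u /\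
     Cderiv_at f1 f2 u /\ Cderiv_at M M1 u) ->
  Cderiv_at f2 f3 0 -> Cderiv_at M1 M2 0 ->
  f1 0 = Cmul (f 0) (M 0) /\
  f2 0 = Cadd (Cmul (f1 0) (M 0)) (Cmul (f 0) (M1 0)) /\
  f3 0 = Cadd (Cadd (Cmul (f2 0) (M 0)) (Cmul (f1 0) (M1 0)))
              (Cadd (Cmul (f1 0) (M1 0)) (Cmul (f 0) (M2 0))).
Proof.
  intros Hr H Hf3 HM2.
  assert (Hr0 : Rabs 0 < r) by (rewrite Rabs_R0; exact Hr).
  assert (E1 : forall u, Rabs u < r -> f1 u = Cmul (f u) (M u)).
  { intros u Hu. destruct (H u Hu) as [HfM [Hf1 _]].
    exact (Cderiv_unique f f1 (fun v => Cmul (f v) (M v)) u Hf1 HfM). }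
  assert (E2 : forall u, Rabs u < r ->
            f2 u = Cadd (Cmul (f1 u) (M u)) (Cmul (f u) (M1 u))).
  { intros u Hu. destruct (H u Hu) as [_ [Hf1 [Hf2 HM1]]].
    apply (Cderiv_unique f1 f2 (fun v => Cadd (Cmul (f1 v) (M v)) (Cmul (f v) (M1 v))) u Hf2).
    apply (Cderiv_local (fun v => Cmul (f v) (M v))).
    - destruct (ball_around u r Hu) as [r' [Hr' Hb]].
      exists r'; split; auto. intros v Hv. symmetry. apply E1, Hb, Hv.
    - apply Cderiv_mul; auto. }
  split; [apply E1, Hr0|]. split; [apply E2, Hr0|].
  destruct (H 0 Hr0) as [_ [Hf1 [Hf2 HM1]]].
  apply (Cderiv_unique f2 f3 (fun v =>
    Cadd (Cadd (Cmul (f2 v) (M v)) (Cmul (f1 v) (M1 v)))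
         (Cadd (Cmul (f1 v) (M1 v)) (Cmul (f v) (M2 v)))) 0 Hf3).
  apply (Cderiv_local (fun v => Cadd (Cmul (f1 v) (M v)) (Cmul (f v) (M1 v)))).
  - exists r; split; auto. intros v Hv. symmetry. apply E2. rewrite Rminus_0_r in Hv. exact Hv.
  - apply Cderiv_add; apply Cderiv_mul; auto.
Qed.

(** * The quantities [rho~_n] in terms of [upsilon], [omega] and [eta] *)

(* [x_+' / x_+ = upsilon + i omega = i eta]. *)
Lemma logder_eta (x x1 : R -> Cx) (s : R) :
  x s <> Czero -> x1 s = Cmul (x s) (Cmul Ci (eta x x1 s)).
Proof.
  intros Hx. pose proof (Cnonzero _ Hx).
  unfold eta, omega, upsilon, logder, Cdiv, Cinv, Ci, Cmul.
  apply Cx_eq; simpl; field; auto.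
Qed.

(* Logarithmic derivative of the local signal [tau |-> x_+(t+tau) e^{-i omega(t) tau}]. *)
Definition loc_rate (x x1 : R -> Cx) (t u : R) : Cx :=
  Cadd (Cmul Ci (eta x x1 (t + u))) (mkC 0 (- omega x x1 t)).

Lemma loc_sig_logderiv (x x1 : R -> Cx) (t u : R) :
  x (t + u) <> Czero -> Cderiv_at x x1 (t + u) ->
  Cderiv_at (loc_sig x x1 t) (fun v => Cmul (loc_sig x x1 t v) (loc_rate x x1 t v)) u.
Proof.
  intros Hx Hd. eapply Cderiv_ext_value.
  - apply (Cderiv_mul (fun v => x (t + v)) (fun v => x1 (t + v))).
    + apply Cderiv_shift, Hd.
    + apply Cderiv_expi.
  - cbv beta. rewrite (logder_eta x x1 (t + u) Hx).
    unfold loc_sig, loc_rate. apply Cx_eq; simpl; ring.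
Qed.

Lemma loc_sig_at0 (x x1 : R -> Cx) (t : R) : loc_sig x x1 t 0 = x t.
Proof.
  unfold loc_sig, Cexpi. rewrite Rplus_0_r, Rmult_0_r, Ropp_0, cos_0, sin_0.
  apply Cx_eq; simpl; ring.
Qed.

Lemma loc_rate_at0 (x x1 : R -> Cx) (t : R) :
  loc_rate x x1 t 0 = RtoC (upsilon x x1 t).
Proof. unfold loc_rate, eta. rewrite Rplus_0_r. apply Cx_eq; simpl; ring. Qed.

Lemma RtoC_mul_nonzero (c : R) (a : Cx) : c <> 0 -> a <> Czero -> Cmul (RtoC c) a <> Czero.
Proof.
  intros Hc Ha E. apply Ha. pose proof (f_equal re E); pose proof (f_equal im E).
  simpl in *. apply Cx_eq; simpl; apply (Rmult_eq_reg_l c); lra.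
Qed.

Lemma rho_closed_forms (t : R) (x x1 e1 e2 g1 g2 g3 : R -> Cx) :
  (exists r, 0 < r /\ forall s, Rabs (s - t) < r -> x s <> Czero /\ Cderiv_at x x1 s) ->
  0 < omega x x1 t ->
  (exists r, 0 < r /\ forall s, Rabs (s - t) < r -> Cderiv_at (eta x x1) e1 s) ->
  Cderiv_at e1 e2 t ->
  (exists r, 0 < r /\ forall tau, Rabs tau < r ->
     Cderiv_at (loc_sig x x1 t) g1 tau /\ Cderiv_at g1 g2 tau) ->
  Cderiv_at g2 g3 0 ->
  let w := omega x x1 t in let v := upsilon x x1 t in
  rho_of x x1 t 1 (g1 0) = RtoC (v / w) /\
  rho_of x x1 t 2 (g2 0) = Cmul (RtoC (/ w ^ 2)) (Cadd (RtoC (v ^ 2)) (Cmul Ci (e1 t))) /\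
  rho_of x x1 t 3 (g3 0) = Cmul (RtoC (/ w ^ 3))
     (Cadd (Cadd (RtoC (v ^ 3)) (Cmul (RtoC (3 * v)) (Cmul Ci (e1 t)))) (Cmul Ci (e2 t))).
Proof.
  intros [rx [Hrx Hx]] Hw [reta [Hre He1]] He2 [rg [Hrg Hg]] Hg3 w v.
  set (r := Rmin rx (Rmin reta rg)).
  assert (Hr : 0 < r) by (repeat apply Rmin_pos; lra).
  assert (Hin : forall u, Rabs u < r ->
            Rabs (t + u - t) < rx /\ Rabs (t + u - t) < reta /\ Rabs u < rg).
  { intros u Hu. replace (t + u - t) with u by ring. unfold r in Hu.
    pose proof (Rmin_l rx (Rmin reta rg)); pose proof (Rmin_r rx (Rmin reta rg)).
    pose proof (Rmin_l reta rg); pose proof (Rmin_r reta rg). lra. }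
  assert (Hxt : x t <> Czero).
  { apply Hx. rewrite Rminus_diag, Rabs_R0. exact Hrx. }
  destruct (logderiv_chain (loc_sig x x1 t) g1 g2 g3 (loc_rate x x1 t)
              (fun u => Cmul Ci (e1 (t + u))) (fun u => Cmul Ci (e2 (t + u))) r Hr)
    as [G1 [G2 G3]].
  - intros u Hu. destruct (Hin u Hu) as [Hux [Hue Hug]].
    destruct (Hx _ Hux) as [Hxu Hdu]. destruct (Hg u Hug) as [Hg1 Hg2].
    split; [apply loc_sig_logderiv; auto|].
    split; [exact Hg1|]. split; [exact Hg2|].
    apply Cderiv_affine, Cderiv_shift, He1, Hue.
  - exact Hg3.
  - apply Cderiv_scale, Cderiv_shift. rewrite Rplus_0_r. exact He2.
  - rewrite loc_sig_at0, loc_rate_at0, Rplus_0_r in *. fold v in G1, G2, G3.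
    assert (Hw0 : w <> 0) by (unfold w; lra).
    unfold rho_of; fold w.
    split; [|split]; apply Cdiv_mul_r; try (apply RtoC_mul_nonzero; [apply pow_nonzero |]; auto);
      rewrite ?G3, ?G2, ?G1; apply Cx_eq; simpl; field; auto.
Qed.

(* The stability conditions bound the [rho~_n]: with [r = upsilon/omega] and
   [a_n = eta^(n-1)/omega^n] one has [rho2 = r^2 + i a_2] and
   [rho3 = r^3 + 3 i r a_2 + i a_3]. *)
Lemma rho_bounds (w v delta : R) (E1 E2 : Cx) :
  0 < w -> Rabs (v / w) <= delta ->
  Cnorm E1 / w ^ 2 <= delta ^ 2 -> Cnorm E2 / w ^ 3 <= delta ^ 3 ->
  Cnorm (RtoC (v / w)) <= delta /\
  Cnorm (Cmul (RtoC (/ w ^ 2)) (Cadd (RtoC (v ^ 2)) (Cmul Ci E1))) <= 2 * delta ^ 2 /\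
  Cnorm (Cmul (RtoC (/ w ^ 3))
     (Cadd (Cadd (RtoC (v ^ 3)) (Cmul (RtoC (3 * v)) (Cmul Ci E1))) (Cmul Ci E2)))
    <= 5 * delta ^ 3.
Proof.
  intros Hw Hr H1 H2.
  set (r := v / w) in *.
  set (a2 := Cmul (RtoC (/ w ^ 2)) E1). set (a3 := Cmul (RtoC (/ w ^ 3)) E2).
  assert (Ha : forall n E, 0 < w ^ n -> Cnorm (Cmul (RtoC (/ w ^ n)) E) = Cnorm E / w ^ n).
  { intros n E Hn. rewrite Cnorm_mul, Cnorm_RtoC, Rabs_pos_eq
      by (left; apply Rinv_0_lt_compat; exact Hn). unfold Rdiv; ring. }
  assert (Ha2 : Cnorm a2 <= delta ^ 2) by (unfold a2; rewrite Ha by (apply pow_lt; lra); exact H1).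
  assert (Ha3 : Cnorm a3 <= delta ^ 3) by (unfold a3; rewrite Ha by (apply pow_lt; lra); exact H2).
  assert (E2' : Cmul (RtoC (/ w ^ 2)) (Cadd (RtoC (v ^ 2)) (Cmul Ci E1))
                = Cadd (RtoC (r ^ 2)) (Cmul Ci a2)).
  { unfold r, a2. apply Cx_eq; simpl; field; lra. }
  assert (E3' : Cmul (RtoC (/ w ^ 3))
       (Cadd (Cadd (RtoC (v ^ 3)) (Cmul (RtoC (3 * v)) (Cmul Ci E1))) (Cmul Ci E2))
       = Cadd (Cadd (RtoC (r ^ 3)) (Cmul (RtoC (3 * r)) (Cmul Ci a2))) (Cmul Ci a3)).
  { unfold r, a2, a3. apply Cx_eq; simpl; field; lra. }
  pose proof (Rabs_pos r).
  assert (Hr2 : Rabs (r ^ 2) <= delta ^ 2) by (rewrite <- RPow_abs; apply pow_incr; lra).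
  assert (Hr3 : Rabs (r ^ 3) <= delta ^ 3) by (rewrite <- RPow_abs; apply pow_incr; lra).
  assert (Hr3a : Rabs (3 * r) * Cnorm a2 <= 3 * delta ^ 3).
  { rewrite Rabs_mult, (Rabs_pos_eq 3) by lra. pose proof (Cnorm_ge0 a2). nra. }
  split; [|split].
  - rewrite Cnorm_RtoC. exact Hr.
  - rewrite E2'. eapply Rle_trans; [apply Cnorm_add|].
    rewrite Cnorm_RtoC, Cnorm_mul, Cnorm_Ci. lra.
  - rewrite E3'. eapply Rle_trans; [apply Cnorm_add|].
    eapply Rle_trans; [apply Rplus_le_compat_r, Cnorm_add|].
    rewrite Cnorm_RtoC, !Cnorm_mul, Cnorm_RtoC, !Cnorm_Ci. lra.
Qed.

(** * Series dominated by a geometric tail *)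

Section DominatedSeries.
Variables (a B : nat -> R) (c r : R).
Hypothesis r_range : 0 <= r < 1.
Hypothesis a_le_B : forall m, Rabs (a m) <= B m.
Hypothesis B_tail : forall k, B (k + 3)%nat <= c * r ^ k.

Lemma partial_tail_bound (N : nat) :
  Rabs (sum_f_R0 a (N + 2) - sum_f_R0 a 2) <= c / (1 - r).
Proof.
  assert (Hc : 0 <= c).
  { pose proof (B_tail 0); pose proof (a_le_B 3); pose proof (Rabs_pos (a 3%nat)).
    simpl in *; lra. }
  assert (Hgeo : forall N, Rabs (sum_f_R0 a (N + 2) - sum_f_R0 a 2)
                           <= c / (1 - r) * (1 - r ^ N)).
  { induction N0 as [|N0 IH].
    - simpl. rewrite Rminus_diag, Rabs_R0. lra.
    - replace (S N0 + 2)%nat with (S (N0 + 2)) by lia. simpl sum_f_R0 at 1.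
      replace (S (N0 + 2)) with (N0 + 3)%nat by lia.
      replace (sum_f_R0 a (N0 + 2) + a (N0 + 3)%nat - sum_f_R0 a 2)
        with ((sum_f_R0 a (N0 + 2) - sum_f_R0 a 2) + a (N0 + 3)%nat) by ring.
      replace (c / (1 - r) * (1 - r ^ S N0))
        with (c / (1 - r) * (1 - r ^ N0) + c * r ^ N0) by (simpl; field; lra).
      pose proof (B_tail N0); pose proof (a_le_B (N0 + 3)).
      eapply Rle_trans; [apply Rabs_triang | lra]. }
  eapply Rle_trans; [apply Hgeo|].
  assert (0 <= r ^ N) by (apply pow_le; lra).
  assert (0 <= c / (1 - r)) by (apply Rmult_le_pos; [lra | left; apply Rinv_0_lt_compat; lra]).
  nra.
Qed.

End DominatedSeries.

Lemma nonneg_series_cv (B : nat -> R) (M : R) :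
  (forall m, 0 <= B m) -> (forall N, sum_f_R0 B (N + 2) <= M) ->
  exists l, infinite_sum B l.
Proof.
  intros H HM. destruct (growing_cv (sum_f_R0 B)) as [l Hl].
  - intro n. simpl. pose proof (H (S n)). lra.
  - exists M. intros y [n ->].
    apply Rle_trans with (sum_f_R0 B (n + 2)); [|apply HM].
    replace (n + 2)%nat with (S (S n)) by lia. simpl.
    pose proof (H (S n)); pose proof (H (S (S n))). lra.
  - exists l. exact Hl.
Qed.

Lemma limit_bound (u : nat -> R) (l S M : R) :
  Un_cv u l -> (forall N, Rabs (u (N + 2)%nat - S) <= M) -> Rabs (l - S) <= M.
Proof.
  intros Hu HM. destruct (Rle_lt_dec (Rabs (l - S)) M) as [|Hlt]; auto. exfalso.
  destruct (Hu (Rabs (l - S) - M)) as [N HN]; [lra|].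
  specialize (HN (N + 2)%nat ltac:(lia)). specialize (HM N). unfold Rdist in HN.
  assert (Rabs (l - S) <= Rabs (u (N + 2)%nat - l) + Rabs (u (N + 2)%nat - S)).
  { replace (l - S) with (- (u (N + 2)%nat - l) + (u (N + 2)%nat - S)) by ring.
    eapply Rle_trans; [apply Rabs_triang | rewrite Rabs_Ropp; lra]. }
  lra.
Qed.

Lemma dominated_series (a B : nat -> R) (c r : R) :
  0 <= r < 1 -> (forall m, Rabs (a m) <= B m) -> (forall k, B (k + 3)%nat <= c * r ^ k) ->
  exists l, infinite_sum a l /\ Rabs (l - sum_f_R0 a 2) <= c / (1 - r).
Proof.
  intros Hr Ha HB.
  assert (HB0 : forall m, 0 <= B m) by (intro m; eapply Rle_trans; [apply Rabs_pos | apply Ha]).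
  set (M := sum_f_R0 B 2 + c / (1 - r)).
  assert (HBs : forall N, sum_f_R0 B (N + 2) <= M).
  { intro N. pose proof (partial_tail_bound B B c r Hr
                           (fun m => Req_le _ _ (Rabs_pos_eq _ (HB0 m))) HB N) as H.
    apply Rabs_le_between in H. unfold M; lra. }
  destruct (nonneg_series_cv B M HB0 HBs) as [lB HlB].
  destruct (nonneg_series_cv (fun m => a m + B m) (2 * M)) as [lS HlS].
  - intro m. pose proof (Ha m) as H. apply Rabs_le_between in H. lra.
  - intro N. rewrite plus_sum. pose proof (HBs N).
    assert (sum_f_R0 a (N + 2) <= sum_f_R0 B (N + 2)).
    { apply sum_Rle. intros n _. pose proof (Ha n) as Hn. apply Rabs_le_between in Hn. lra. }
    lra.
  - assert (Hcv : infinite_sum a (lS - lB)).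
    { intros eps Heps. destruct (CV_minus _ _ _ _ HlS HlB eps Heps) as [N HN].
      exists N. intros n Hn. specialize (HN n Hn). rewrite <- minus_sum in HN.
      replace (sum_f_R0 a n) with (sum_f_R0 (fun i => a i + B i - B i) n); [exact HN|].
      apply sum_eq. intros; ring. }
    exists (lS - lB). split; [exact Hcv|].
    apply (limit_bound (sum_f_R0 a)); [exact Hcv|].
    intro N. apply (partial_tail_bound a B c r); auto.
Qed.

Lemma Cdominated_series (a : nat -> Cx) (B : nat -> R) (c r : R) :
  0 <= r < 1 -> (forall m, Cnorm (a m) <= B m) -> (forall k, B (k + 3)%nat <= c * r ^ k) ->
  exists S, Cinfinite_sum a S /\ Cnorm (Csub S (Csum_upto a 2)) <= 2 * (c / (1 - r)).
Proof.
  intros Hr Ha HB.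
  destruct (dominated_series (fun m => re (a m)) B c r Hr) as [lre [Hre Bre]]; auto.
  { intro m. eapply Rle_trans; [apply re_le | apply Ha]. }
  destruct (dominated_series (fun m => im (a m)) B c r Hr) as [lim [Him Bim]]; auto.
  { intro m. eapply Rle_trans; [apply im_le | apply Ha]. }
  exists (mkC lre lim). split; [split; assumption|].
  eapply Rle_trans; [apply Cnorm_le_reim|].
  simpl in *. replace (lre + - (re (a 0%nat) + re (a 1%nat) + re (a 2%nat)))
    with (lre - (re (a 0%nat) + re (a 1%nat) + re (a 2%nat))) by ring.
  replace (lim + - (im (a 0%nat) + im (a 1%nat) + im (a 2%nat)))
    with (lim - (im (a 0%nat) + im (a 1%nat) + im (a 2%nat))) by ring.
  lra.
Qed.

(* [k] rounded down to an even number: the suitability criteria read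
   [|w_k| <= k! / delta^(even_floor k / 2)]. *)
Definition even_floor (k : nat) : nat := if Nat.even k then k else (k - 1)%nat.

Lemma even_floor_le (k : nat) : (even_floor k <= k)%nat.
Proof. unfold even_floor; destruct (Nat.even k); lia. Qed.

(* Wavelet suitability, written with [s = sqrt delta]. *)
Definition suitable (w : nat -> Cx) (s : R) : Prop :=
  forall k, (2 <= k)%nat -> Cnorm (w k) * s ^ even_floor k <= INR (fact k).

Lemma INR_fact_ge1 (n : nat) : 1 <= INR (fact n).
Proof. apply (le_INR 1). pose proof (lt_O_fact n). lia. Qed.

Lemma pow_decr (s : R) (a b : nat) : 0 < s <= 1 -> (a <= b)%nat -> s ^ b <= s ^ a.
Proof.
  intros Hs Hab. replace b with (a + (b - a))%nat by lia. rewrite pow_add.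
  assert (0 < s ^ a) by (apply pow_lt; lra).
  assert (s ^ (b - a) <= 1) by (rewrite <- (pow1 (b - a)); apply pow_incr; lra).
  nra.
Qed.

Lemma Fterm_norm_le (w : nat -> Cx) (r1 r2 r3 : Cx) (z : R) (m n p : nat) :
  Cnorm (Fterm w r1 r2 r3 z m n p) <=
  / INR (fact m) * (Cnorm (w (m + n)%nat) * Cnorm (rho_seq r1 r2 r3 n)) * Rabs z ^ (m + p).
Proof.
  pose proof (INR_fact_ge1 (n - p)); pose proof (INR_fact_ge1 p); pose proof (INR_fact_ge1 m).
  unfold Fterm.
  assert (Hf : 0 < INR (fact (n - p)) * INR (fact p) * INR (fact m))
    by (repeat apply Rmult_lt_0_compat; lra).
  rewrite !Cnorm_mul, Cnorm_pow, Cnorm_mi, pow1, !Cnorm_RtoC, Cnorm_conj, <- RPow_abs,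
    (Rabs_pos_eq (/ _)) by (left; apply Rinv_0_lt_compat, Hf).
  assert (HQ : 0 <= Cnorm (w (m + n)%nat) * Cnorm (rho_seq r1 r2 r3 n) * Rabs z ^ (m + p)).
  { apply Rmult_le_pos; [apply Rmult_le_pos; apply Cnorm_ge0 | apply pow_le, Rabs_pos]. }
  assert (Hinv : / (INR (fact (n - p)) * INR (fact p) * INR (fact m)) <= / INR (fact m)).
  { assert (1 <= INR (fact (n - p)) * INR (fact p)) by nra.
    apply Rinv_le_contravar; [lra | nra]. }
  replace (1 * / (INR (fact (n - p)) * INR (fact p) * INR (fact m))
            * (Cnorm (w (m + n)%nat) * Cnorm (rho_seq r1 r2 r3 n)) * Rabs z ^ (m + p))
    with (/ (INR (fact (n - p)) * INR (fact p) * INR (fact m))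
            * (Cnorm (w (m + n)%nat) * Cnorm (rho_seq r1 r2 r3 n) * Rabs z ^ (m + p))) by ring.
  eapply Rle_trans; [apply Rmult_le_compat_r; [exact HQ | exact Hinv] | right; ring].
Qed.

Lemma rho_seq_bound (r1 r2 r3 : Cx) (s : R) (n : nat) :
  0 < s <= 1 -> Cnorm r1 <= s ^ 2 -> Cnorm r2 <= 2 * s ^ 4 -> Cnorm r3 <= 5 * s ^ 6 ->
  (n <= 3)%nat -> Cnorm (rho_seq r1 r2 r3 n) <= 5 * s ^ (2 * n).
Proof.
  intros Hs H1 H2 H3 Hn.
  assert (0 <= s ^ 2) by (apply pow_le; lra). assert (0 <= s ^ 4) by (apply pow_le; lra).
  destruct n as [|[|[|[|n]]]]; simpl rho_seq; simpl (2 * _)%nat; try lia.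
  - rewrite Cnorm_Cone. simpl. lra.
  - lra.
  - lra.
  - lra.
Qed.

Definition rising3 (m : nat) : R := (INR m + 1) * (INR m + 2) * (INR m + 3).

Lemma fact_ratio_le (m n : nat) :
  (n <= 3)%nat -> INR (fact (m + n)) / INR (fact m) <= rising3 m.
Proof.
  intros Hn. pose proof (INR_fact_ge1 m).
  apply (Rmult_le_reg_r (INR (fact m))); [lra|].
  unfold Rdiv. rewrite Rmult_assoc, Rinv_l, Rmult_1_r by lra.
  apply Rle_trans with (INR (fact (m + 3))); [apply le_INR, fact_le; lia|].
  replace (m + 3)%nat with (S (S (S m))) by lia. rewrite !fact_simpl, !mult_INR, !S_INR.
  unfold rising3. right; ring.
Qed.

(* For [q <= 1/2] the sequence [rising3 m q^m] decays geometrically from [m = 3]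
   with ratio [7/8], since [(m+4) q <= 7/8 (m+1)] for [m >= 3]. *)
Lemma rising3_decay (q : R) (k : nat) :
  0 <= q <= 1/2 -> rising3 (k + 3) * q ^ (k + 3) <= rising3 3 * q ^ 3 * (7/8) ^ k.
Proof.
  intros Hq. induction k as [|k IH]; [simpl; lra|].
  replace (S k + 3)%nat with (S (k + 3)) by lia.
  unfold rising3 in *. rewrite S_INR. simpl pow.
  set (m := INR (k + 3)) in *.
  assert (Hm : 3 <= m) by (unfold m; rewrite plus_INR; simpl; pose proof (pos_INR k); lra).
  assert (0 <= q ^ (k + 3)) by (apply pow_le; lra).
  assert (Hstep : (m + 1 + 1) * (m + 1 + 2) * (m + 1 + 3) * q
                  <= 7/8 * ((m + 1) * (m + 2) * (m + 3))).
  { assert (0 <= (m + 2) * (m + 3)) by nra.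
    assert ((m + 4) * q <= 7/8 * (m + 1)) by nra. nra. }
  apply Rle_trans with (7/8 * ((m + 1) * (m + 2) * (m + 3) * q ^ (k + 3))); [nra | lra].
Qed.

Lemma Finner_norm (w : nat -> Cx) (r1 r2 r3 : Cx) (z : R) (m : nat) :
  Cnorm (Finner w r1 r2 r3 z m) <= Finner_abs w r1 r2 r3 z m.
Proof.
  eapply Rle_trans; [apply Csum_upto_norm|].
  apply sum_Rle. intros n _. apply Csum_upto_norm.
Qed.

Lemma Finner_abs_le (w : nat -> Cx) (r1 r2 r3 : Cx) (z : R) (m : nat) (T : R) :
  (forall n p, (n <= 3)%nat -> (p <= n)%nat -> Cnorm (Fterm w r1 r2 r3 z m n p) <= T) ->
  Finner_abs w r1 r2 r3 z m <= 10 * T.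
Proof.
  intros HT. unfold Finner_abs.
  apply Rle_trans with (sum_f_R0 (fun n => sum_f_R0 (fun _ => T) n) 3).
  - apply sum_Rle. intros n Hn. apply sum_Rle. intros p Hp. apply HT; lia.
  - simpl. lra.
Qed.

(** * The head [m <= 2] of [F(z) - F(0)] *)

Definition inner_sum (T : nat -> nat -> nat -> Cx) (m : nat) : Cx :=
  Csum_upto (fun n => Csum_upto (fun p => T m n p) n) 3.

Definition main_part (T : nat -> nat -> nat -> Cx) : Cx :=
  Cadd (Cadd (T 1 1 0)%nat (Cadd (Cadd (T 0 2 1)%nat (T 1 2 0)%nat) (T 1 3 0)%nat))
       (T 2 0 0)%nat.

Lemma Fmain_main_part (w : nat -> Cx) (r1 r2 r3 : Cx) (z : R) :
  Fmain w r1 r2 r3 z = main_part (Fterm w r1 r2 r3 z).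
Proof.
  unfold Fmain, main_part, Fterm. simpl rho_seq. simpl Nat.add. simpl Nat.sub.
  simpl fact. simpl INR.
  apply Cx_eq; unfold Cadd, Cmul, Csub, Copp, Cpow, Cone, Ci, Cconj, RtoC; simpl; field.
Qed.

(* The summands [(m, n, p)], [m <= 2], that are neither constant in [z] nor in
   the main part. *)
Definition remainder_triples : list (nat * nat * nat) :=
  ((0,1,1) :: (0,2,2) :: (0,3,1) :: (0,3,2) :: (0,3,3) ::
   (1,0,0) :: (1,1,1) :: (1,2,1) :: (1,2,2) :: (1,3,1) :: (1,3,2) :: (1,3,3) ::
   (2,1,0) :: (2,1,1) :: (2,2,0) :: (2,2,1) :: (2,2,2) :: (2,3,0) :: (2,3,1) ::
   (2,3,2) :: (2,3,3) :: nil)%nat.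

Fixpoint Csum_list (T : nat -> nat -> nat -> Cx) (l : list (nat * nat * nat)) : Cx :=
  match l with
  | nil => Czero
  | (m, n, p) :: l' => Cadd (T m n p) (Csum_list T l')
  end.

Lemma Csum_list_norm (T : nat -> nat -> nat -> Cx) (l : list (nat * nat * nat)) (M : R) :
  (forall m n p, In (m, n, p) l -> Cnorm (T m n p) <= M) ->
  Cnorm (Csum_list T l) <= INR (length l) * M.
Proof.
  induction l as [|[[m n] p] l IH]; intros HM; simpl Csum_list.
  - rewrite Cnorm_Czero. simpl. lra.
  - simpl length. rewrite S_INR. eapply Rle_trans; [apply Cnorm_add|].
    pose proof (HM m n p (or_introl eq_refl)).
    assert (Cnorm (Csum_list T l) <= INR (length l) * M) by (apply IH; intros; apply HM; right; auto).
    lra.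
Qed.

(* Bookkeeping: the first three terms of [F(z)], minus [F(0)] and the main part,
   leave exactly the remainder summands.  [T0] stands for the summands at [z = 0]. *)
Lemma head_decomposition (T T0 : nat -> nat -> nat -> Cx) :
  (forall n, T0 0%nat n 0%nat = T 0%nat n 0%nat) ->
  (forall m n p, (1 <= m + p)%nat -> T0 m n p = Czero) ->
  Csub (Csub (Csum_upto (inner_sum T) 2) (inner_sum T0 0)) (main_part T)
  = Csum_list T remainder_triples.
Proof.
  intros H0 Hz. unfold inner_sum, main_part. simpl.
  rewrite !H0, !(Hz 0%nat _ (S _)) by lia.
  apply Cx_eq; simpl; ring.
Qed.

Lemma Fterm_vanishing_coeff (w : nat -> Cx) (r1 r2 r3 : Cx) (z : R) (m n p : nat) :
  w (m + n)%nat = Czero -> Fterm w r1 r2 r3 z m n p = Czero.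
Proof. intros H. unfold Fterm. rewrite H. apply Cx_eq; simpl; ring. Qed.

Lemma Fterm_at_zero (w : nat -> Cx) (r1 r2 r3 : Cx) (m n p : nat) :
  (1 <= m + p)%nat -> Fterm w r1 r2 r3 0 m n p = Czero.
Proof. intros H. unfold Fterm. rewrite pow_i by lia. apply Cx_eq; simpl; ring. Qed.

Lemma F_at_zero (w : nat -> Cx) (r1 r2 r3 : Cx) :
  Cinfinite_sum (Finner w r1 r2 r3 0) (Finner w r1 r2 r3 0 0).
Proof.
  assert (Hk : forall k, Finner w r1 r2 r3 0 (S k) = Czero).
  { intro k. unfold Finner. simpl. rewrite !Fterm_at_zero by lia.
    apply Cx_eq; simpl; ring. }
  assert (Hconst : forall f : nat -> R, (forall k, f (S k) = 0) -> infinite_sum f (f 0%nat)).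
  { intros f Hf eps Heps. exists 0%nat. intros n _. unfold Rdist.
    replace (sum_f_R0 f n) with (f 0%nat); [rewrite Rminus_diag, Rabs_R0; lra|].
    induction n as [|n IH]; simpl; [reflexivity | rewrite <- IH, Hf; ring]. }
  split; apply Hconst; intro k; rewrite Hk; reflexivity.
Qed.

(** * Estimates in the instantaneous frequency 2-neighbourhood *)

Section TermBounds.
Variables (s C z : R) (w : nat -> Cx) (r1 r2 r3 : Cx).
Hypothesis s_range : 0 < s <= 1.
Hypothesis C_pos : 0 < C.
Hypothesis z_small : Rabs z <= C * s ^ 4.
Hypothesis rho_small : forall n, (n <= 3)%nat -> Cnorm (rho_seq r1 r2 r3 n) <= 5 * s ^ (2 * n).
Hypothesis w_suitable : suitable w s.

(* Every term is bounded by [(m+n)!/m! 5 C^(m+p) s^e], where [e] collects the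
   powers [s^(2n)] from [rho~_n], [s^(4(m+p))] from [z^(m+p)] and
   [s^(-even_floor(m+n))] from [w_(m+n)]. *)
Lemma Fterm_bound (m n p : nat) :
  (n <= 3)%nat -> (2 <= m + n)%nat ->
  Cnorm (Fterm w r1 r2 r3 z m n p) <=
  INR (fact (m + n)) / INR (fact m) * 5 * C ^ (m + p)
    * s ^ (2 * n + 4 * (m + p) - even_floor (m + n)).
Proof.
  intros Hn Hmn.
  set (ef := even_floor (m + n)). set (j := (m + p)%nat).
  set (e := (2 * n + 4 * j - ef)%nat).
  pose proof (even_floor_le (m + n)).
  assert (Hsef : 0 < s ^ ef) by (apply pow_lt; lra).
  assert (Hsplit : s ^ (2 * n) * s ^ (4 * j) = s ^ ef * s ^ e).
  { rewrite <- !pow_add. f_equal. unfold e, j, ef in *. lia. }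
  assert (Hw : Cnorm (w (m + n)%nat) <= INR (fact (m + n)) / s ^ ef).
  { pose proof (w_suitable (m + n)%nat Hmn) as Hk. fold ef in Hk.
    apply (Rmult_le_reg_r (s ^ ef)); auto.
    unfold Rdiv. rewrite Rmult_assoc, Rinv_l; lra. }
  assert (Hz : Rabs z ^ j <= C ^ j * s ^ (4 * j)).
  { rewrite pow_mult, <- Rpow_mult_distr. apply pow_incr. split; [apply Rabs_pos | exact z_small]. }
  pose proof (Cnorm_ge0 (w (m + n)%nat)). pose proof (Cnorm_ge0 (rho_seq r1 r2 r3 n)).
  pose proof (INR_fact_ge1 m).
  pose proof (rho_small n Hn) as Hrho.
  assert (Hpos : 0 <= s ^ (2 * n) /\ 0 <= C ^ j /\ 0 <= s ^ (4 * j) /\ 0 < / INR (fact m)).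
  { repeat split; try (apply pow_le; lra). apply Rinv_0_lt_compat; lra. }
  eapply Rle_trans; [apply Fterm_norm_le|]. fold j.
  apply Rle_trans with
    (/ INR (fact m) * (INR (fact (m + n)) / s ^ ef * (5 * s ^ (2 * n))) * (C ^ j * s ^ (4 * j))).
  { apply Rmult_le_compat; [| apply pow_le, Rabs_pos | | exact Hz].
    - apply Rmult_le_pos; [lra | apply Rmult_le_pos; auto].
    - apply Rmult_le_compat_l; [lra|]. apply Rmult_le_compat; auto. }
  right. replace (s ^ e) with (s ^ (2 * n) * s ^ (4 * j) / s ^ ef)
    by (rewrite Hsplit; field; lra).
  unfold Rdiv. field. split; lra.
Qed.

Lemma remainder_term_bound (m n p : nat) :
  (n <= 3)%nat -> (2 <= m + n <= 5)%nat -> (m + p <= 5)%nat ->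
  (8 + even_floor (m + n) <= 2 * n + 4 * (m + p))%nat ->
  Cnorm (Fterm w r1 r2 r3 z m n p) <= 600 * (1 + C) ^ 5 * s ^ 8.
Proof.
  intros Hn Hmn Hj He.
  eapply Rle_trans; [apply Fterm_bound; lia|].
  pose proof (INR_fact_ge1 m).
  assert (HF : INR (fact (m + n)) / INR (fact m) <= 120).
  { apply Rle_trans with (INR (fact (m + n))).
    - unfold Rdiv. pose proof (INR_fact_ge1 (m + n)).
      assert (/ INR (fact m) <= 1) by (rewrite <- Rinv_1; apply Rinv_le_contravar; lra).
      assert (0 < / INR (fact m)) by (apply Rinv_0_lt_compat; lra). nra.
    - replace 120 with (INR (fact 5)) by (simpl; lra). apply le_INR, fact_le; lia. }
  assert (HC : C ^ (m + p) <= (1 + C) ^ 5).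
  { apply Rle_trans with ((1 + C) ^ (m + p)); [apply pow_incr; lra | apply Rle_pow; lia || lra]. }
  assert (Hs : s ^ (2 * n + 4 * (m + p) - even_floor (m + n)) <= s ^ 8) by (apply pow_decr; lia || lra).
  assert (0 <= INR (fact (m + n)) / INR (fact m))
    by (apply Rmult_le_pos; [apply pos_INR | left; apply Rinv_0_lt_compat; lra]).
  assert (0 <= C ^ (m + p)) by (apply pow_le; lra).
  assert (0 <= s ^ (2 * n + 4 * (m + p) - even_floor (m + n))) by (apply pow_le; lra).
  replace (600 * (1 + C) ^ 5 * s ^ 8) with (120 * 5 * (1 + C) ^ 5 * s ^ 8) by ring.
  set (a := INR (fact (m + n)) / INR (fact m)) in *. clearbody a.
  repeat (apply Rmult_le_compat || apply Rmult_le_pos); lra.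
Qed.

Lemma tail_term_bound (m n p : nat) :
  (n <= 3)%nat -> (p <= 3)%nat -> (2 <= m)%nat ->
  Cnorm (Fterm w r1 r2 r3 z m n p) <= 5 * (1 + C) ^ 3 * rising3 m * (C * s ^ 3) ^ m.
Proof.
  intros Hn Hp Hm.
  eapply Rle_trans; [apply Fterm_bound; lia|].
  assert (HF := fact_ratio_le m n Hn).
  assert (HC : C ^ (m + p) <= C ^ m * (1 + C) ^ 3).
  { rewrite pow_add. apply Rmult_le_compat_l; [apply pow_le; lra|].
    apply Rle_trans with ((1 + C) ^ p); [apply pow_incr; lra | apply Rle_pow; lia || lra]. }
  assert (Hs : s ^ (2 * n + 4 * (m + p) - even_floor (m + n)) <= s ^ (3 * m)).
  { pose proof (even_floor_le (m + n)). apply pow_decr; lia || lra. }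
  assert (0 <= INR (fact (m + n)) / INR (fact m))
    by (apply Rmult_le_pos; [apply pos_INR | left; apply Rinv_0_lt_compat, INR_fact_lt_0]).
  assert (0 <= C ^ (m + p)) by (apply pow_le; lra).
  assert (0 <= s ^ (2 * n + 4 * (m + p) - even_floor (m + n))) by (apply pow_le; lra).
  replace (5 * (1 + C) ^ 3 * rising3 m * (C * s ^ 3) ^ m)
    with (rising3 m * 5 * (C ^ m * (1 + C) ^ 3) * s ^ (3 * m))
    by (rewrite Rpow_mult_distr, <- pow_mult; ring).
  set (a := INR (fact (m + n)) / INR (fact m)) in *. clearbody a.
  set (b := C ^ m * (1 + C) ^ 3) in *. clearbody b.
  repeat (apply Rmult_le_compat || apply Rmult_le_pos); lra.
Qed.

Hypothesis q_small : C * s ^ 3 <= 1/2.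

Lemma Finner_abs_tail (k : nat) :
  Finner_abs w r1 r2 r3 z (k + 3) <= 6000 * (1 + C) ^ 6 * s ^ 8 * (7/8) ^ k.
Proof.
  assert (Hq : 0 <= C * s ^ 3 <= 1/2) by (split; [apply Rmult_le_pos; [lra | apply pow_le; lra] | lra]).
  eapply Rle_trans.
  { apply Finner_abs_le. intros n p Hn Hp. apply tail_term_bound; lia. }
  pose proof (rising3_decay _ k Hq) as Hdec.
  assert (Hq3 : (C * s ^ 3) ^ 3 <= (1 + C) ^ 3 * s ^ 8).
  { rewrite Rpow_mult_distr, <- pow_mult.
    apply Rmult_le_compat; try (apply pow_le; lra); [apply pow_incr; lra|].
    apply pow_decr; lia || lra. }
  assert (HC3 : 0 <= (1 + C) ^ 3) by (apply pow_le; lra).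
  assert (0 <= (7/8) ^ k) by (apply pow_le; lra).
  replace (rising3 3) with 120 in Hdec by (unfold rising3; simpl; ring).
  replace (6000 * (1 + C) ^ 6 * s ^ 8 * (7 / 8) ^ k)
    with (50 * (1 + C) ^ 3 * (120 * ((1 + C) ^ 3 * s ^ 8) * (7 / 8) ^ k)) by ring.
  replace (10 * (5 * (1 + C) ^ 3 * rising3 (k + 3) * (C * s ^ 3) ^ (k + 3)))
    with (50 * (1 + C) ^ 3 * (rising3 (k + 3) * (C * s ^ 3) ^ (k + 3))) by ring.
  apply Rmult_le_compat_l; [lra|].
  eapply Rle_trans; [exact Hdec|].
  apply Rmult_le_compat_r; [lra|]. apply Rmult_le_compat_l; lra.
Qed.

Hypothesis w1_zero : w 1%nat = Czero.

Lemma remainder_bound (m n p : nat) :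
  In (m, n, p) remainder_triples ->
  Cnorm (Fterm w r1 r2 r3 z m n p) <= 600 * (1 + C) ^ 5 * s ^ 8.
Proof.
  assert (Hpos : 0 <= 600 * (1 + C) ^ 5 * s ^ 8).
  { repeat apply Rmult_le_pos; try lra; apply pow_le; lra. }
  intros Hin. simpl in Hin.
  repeat destruct Hin as [Hin|Hin]; try contradiction; injection Hin as <- <- <-;
  first
  [ (* [m + n = 1]: the summand carries the factor [w_1 = 0] *)
    rewrite Fterm_vanishing_coeff, Cnorm_Czero by exact w1_zero; exact Hpos
  | apply remainder_term_bound; unfold even_floor; simpl; lia ].
Qed.

Lemma series_estimate :
  (exists l, infinite_sum (Finner_abs w r1 r2 r3 z) l) /\
  exists Fz F0 : Cx,
    Cinfinite_sum (Finner w r1 r2 r3 z) Fz /\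
    Cinfinite_sum (Finner w r1 r2 r3 0) F0 /\
    Cnorm (Csub (Csub Fz F0) (Fmain w r1 r2 r3 z))
      <= (12600 * (1 + C) ^ 5 + 96000 * (1 + C) ^ 6) * s ^ 8.
Proof.
  set (c := 6000 * (1 + C) ^ 6 * s ^ 8).
  assert (Hr : 0 <= 7/8 < 1) by lra.
  assert (Habs : forall m, Cnorm (Finner w r1 r2 r3 z m) <= Finner_abs w r1 r2 r3 z m)
    by apply Finner_norm.
  assert (Hpos : forall m, 0 <= Finner_abs w r1 r2 r3 z m)
    by (intro m; eapply Rle_trans; [apply Cnorm_ge0 | apply Habs]).
  split.
  { destruct (dominated_series (Finner_abs w r1 r2 r3 z) (Finner_abs w r1 r2 r3 z) c (7/8) Hr)
      as [l [Hl _]]; [intro m; rewrite Rabs_pos_eq; auto; lra | apply Finner_abs_tail |].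
    exists l; exact Hl. }
  destruct (Cdominated_series (Finner w r1 r2 r3 z) (Finner_abs w r1 r2 r3 z) c (7/8) Hr Habs
              Finner_abs_tail) as [Fz [HFz Htail]].
  exists Fz, (Finner w r1 r2 r3 0 0). split; [exact HFz|]. split; [apply F_at_zero|].
  assert (Hhead : Csub (Csub (Csum_upto (Finner w r1 r2 r3 z) 2) (Finner w r1 r2 r3 0 0))
                       (Fmain w r1 r2 r3 z)
                  = Csum_list (Fterm w r1 r2 r3 z) remainder_triples).
  { rewrite Fmain_main_part.
    apply (head_decomposition (Fterm w r1 r2 r3 z) (Fterm w r1 r2 r3 0));
      [reflexivity | apply Fterm_at_zero]. }
  pose proof (Csum_list_norm _ remainder_triples _ remainder_bound) as Hrem.
  rewrite <- Hhead in Hrem. simpl length in Hrem.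
  replace (Csub (Csub Fz (Finner w r1 r2 r3 0 0)) (Fmain w r1 r2 r3 z))
    with (Cadd (Csub Fz (Csum_upto (Finner w r1 r2 r3 z) 2))
               (Csub (Csub (Csum_upto (Finner w r1 r2 r3 z) 2) (Finner w r1 r2 r3 0 0))
                     (Fmain w r1 r2 r3 z)))
    by (apply Cx_eq; simpl; ring).
  eapply Rle_trans; [apply Cnorm_add|].
  replace (2 * (c / (1 - 7 / 8))) with (16 * c) in Htail by (field; lra).
  unfold c in Htail. simpl INR in Hrem. lra.
Qed.

End TermBounds.

Lemma div_le_mul (x F y : R) : 0 < y -> x <= F / y -> x * y <= F.
Proof.
  intros Hy H. apply (Rmult_le_compat_r y) in H; [|lra].
  unfold Rdiv in H. rewrite Rmult_assoc, Rinv_l, Rmult_1_r in H by lra. exact H.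
Qed.

Lemma suitable_of_criteria (w : nat -> Cx) (delta : R) :
  0 < delta ->
  (forall k, (2 <= k)%nat -> Nat.Even k -> Cnorm (w k) <= INR (fact k) / (sqrt delta ^ k)) ->
  (forall k, (3 <= k)%nat -> Nat.Odd k ->
     Cnorm (w k) <= INR (fact k) / (sqrt delta ^ (k - 1))) ->
  suitable w (sqrt delta).
Proof.
  intros Hd Heven Hodd k Hk.
  assert (Hs : 0 < sqrt delta) by (apply sqrt_lt_R0; exact Hd).
  apply div_le_mul; [apply pow_lt, Hs|]. unfold even_floor.
  destruct (Nat.Even_or_Odd k) as [He|Ho].
  - rewrite (proj2 (Nat.even_spec k) He). apply Heven; auto.
  - assert (Hev : Nat.even k = false).
    { rewrite <- Nat.negb_odd, (proj2 (Nat.odd_spec k) Ho). reflexivity. }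
    rewrite Hev. apply Hodd; auto. destruct Ho as [j ->]. lia.
Qed.

Theorem theorem4 :
  forall Cc : R, 0 < Cc ->
  exists K : R,
  forall (delta t : R) (x x1 x2 x3 : R -> Cx) (e1 e2 : R -> Cx)
         (g1 g2 g3 : R -> Cx) (w : nat -> Cx) (z : R),
    0 < delta <= 1 ->
    (* x_+ is Cx^3 and nonvanishing near t *)
    (exists r, 0 < r /\ forall s, Rabs (s - t) < r ->
       x s <> Czero /\ Cderiv_at x x1 s /\ Cderiv_at x1 x2 s /\
       Cderiv_at x2 x3 s /\ Ccont_at x3 s) ->
    0 < omega x x1 t ->
    (* eta' and eta'' *)
    (exists r, 0 < r /\ forall s, Rabs (s - t) < r -> Cderiv_at (eta x x1) e1 s) ->
    Cderiv_at e1 e2 t ->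
    (* tau-derivatives of x_+(t+tau) e^{-i omega(t) tau} *)
    (exists r, 0 < r /\ forall tau, Rabs tau < r ->
       Cderiv_at (loc_sig x x1 t) g1 tau /\ Cderiv_at g1 g2 tau) ->
    Cderiv_at g2 g3 0 ->
    (* stability conditions *)
    Rabs (upsilon x x1 t / omega x x1 t) <= delta ->
    Cnorm (e1 t) / omega x x1 t ^ 2 <= delta ^ 2 ->
    Cnorm (e2 t) / omega x x1 t ^ 3 <= delta ^ 3 ->
    (* wavelet suitability *)
    w 0%nat = Cone -> w 1%nat = Czero ->
    (forall k, (2 <= k)%nat -> Nat.Even k ->
       Cnorm (w k) <= INR (fact k) / (sqrt delta ^ k)) ->
    (forall k, (3 <= k)%nat -> Nat.Odd k ->
       Cnorm (w k) <= INR (fact k) / (sqrt delta ^ (k - 1))) ->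
    Cc * (delta * sqrt delta) <= 1/2 ->
    Rabs z <= Cc * delta ^ 2 ->
    let r1 := rho_of x x1 t 1 (g1 0) in
    let r2 := rho_of x x1 t 2 (g2 0) in
    let r3 := rho_of x x1 t 3 (g3 0) in
    (exists l, infinite_sum (Finner_abs w r1 r2 r3 z) l) /\
    exists Fz F0 : Cx,
      Cinfinite_sum (Finner w r1 r2 r3 z) Fz /\
      Cinfinite_sum (Finner w r1 r2 r3 0) F0 /\
      Cnorm (Csub (Csub Fz F0) (Fmain w r1 r2 r3 z)) <= K * delta ^ 4.
Proof.
  intros Cc HCc. exists (12600 * (1 + Cc) ^ 5 + 96000 * (1 + Cc) ^ 6).
  intros delta t x x1 x2 x3 e1 e2 g1 g2 g3 w z Hd [rx [Hrx Hx]] Hw Heta He2 Hg Hg3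
    Hv He1b He2b _ Hw1 Heven Hodd Hq Hz r1 r2 r3.
  destruct (rho_closed_forms t x x1 e1 e2 g1 g2 g3) as [R1 [R2 R3]]; auto.
  { exists rx. split; auto. intros s Hs. destruct (Hx s Hs) as [Hxs [Hdx _]]. auto. }
  destruct (rho_bounds _ _ delta (e1 t) (e2 t) Hw Hv He1b He2b) as [B1 [B2 B3]].
  rewrite <- R1 in B1; rewrite <- R2 in B2; rewrite <- R3 in B3.
  fold r1 in B1; fold r2 in B2; fold r3 in B3.
  assert (Hsuit := suitable_of_criteria w delta (proj1 Hd) Heven Hodd).
  set (s := sqrt delta) in *.
  assert (Hs0 : 0 < s) by (apply sqrt_lt_R0; lra).
  assert (Hds : delta = s ^ 2) by (unfold s; simpl; rewrite Rmult_1_r, sqrt_sqrt; lra).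
  assert (Hs1 : s <= 1) by (destruct (Rle_lt_dec s 1); [auto | nra]).
  rewrite Hds in *. replace ((s ^ 2) ^ 4) with (s ^ 8) by ring.
  apply (series_estimate s Cc z w r1 r2 r3).
  - lra.
  - exact HCc.
  - lra.
  - intros n Hn. apply rho_seq_bound; auto; lra.
  - exact Hsuit.
  - lra.
  - exact Hw1.
Qed.
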